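(* Let $n\ge1$ and let $G$ be the $n\times n$ comparability grid. Let $X\subseteq V(G)$ satisfy $|X|\le n^2/2$ and $r(X)\le n/4$. Then $|X|<n^2/3$.
   Context: For positive integers $m,n$, the $m\times n$ comparability grid is the simple graph with vertex set $\{1,\dots,m\}\times\{1,\dots,n\}$ in which distinct vertices $(i,j)$ and $(i',j')$ are adjacent iff either ($i\le i'$ and $j\le j'$) or ($i\ge i'$ and $j\ge j'$). For a graph $G$ and $X\subseteq V(G)$, the cut-rank $r(X)$ is the rank over $\mathrm{GF}(2)$ of the submatrix of the adjacency matrix of $G$ with rows indexed by $X$ and columns indexed by $V(G)\setminus X$. *)

From mathcomp Require Import all_boot all_algebra.
Set Implicit Arguments. Unset Strict Implicit. Unset Printing Implicit Defensive.

(* Vertices of the m x n comparability grid: pairs (i,j) with i : 'I_m, j : 'I_n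
   (0-indexed; shifting indices does not change the order). *)
Definition grid_vertex (m n : nat) := ('I_m * 'I_n)%type.

Definition cgrid_adj (m n : nat) (u v : grid_vertex m n) : bool :=
  (u != v) &&
  (((u.1 <= v.1) && (u.2 <= v.2)) || ((v.1 <= u.1) && (v.2 <= u.2)))%N.

Definition cut_matrix (T : finType) (adj : rel T) (X : {set T})
  : 'M['F_2]_(#|X|, #|~: X|) :=
  \matrix_(i < #|X|, j < #|~: X|)
     ((adj (enum_val i) (enum_val j))%:R)%R.

Definition cut_rank (T : finType) (adj : rel T) (X : {set T}) : nat :=
  \rank (cut_matrix adj X).

From mathcomp Require Import all_boot all_order all_algebra zify.
Set Implicit Arguments. Unset Strict Implicit. Unset Printing Implicit Defensive.
Import Order.TTheory GRing.Theory.

(* Call a row or column mixed if it meets both X and its complement. Splitting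
   the mixed rows by whether their first vertex lies in X, each half yields a
   unitriangular minor of the cut matrix (pair the first vertex of a row with a
   vertex of the other side in that row), so there are at most 2 r(X) mixed rows,
   and likewise columns. When r(X) <= n/4 some row and some column are pure, and
   then one side of the cut lies inside (mixed rows) x (mixed columns), hence has
   at most 4 r(X)^2 <= n^2/4 vertices; as |X| <= n^2/2, that side must be X. *)

Lemma mxrank_mxsub (F : fieldType) m n m' n' (f : 'I_m' -> 'I_m) (g : 'I_n' -> 'I_n)
    (A : 'M[F]_(m, n)) :
  (\rank (mxsub f g A) <= \rank A)%N.
Proof.
have -> : mxsub f g A = rowsub f (colsub g A) by apply/matrixP => i j; rewrite !mxE.
apply: leq_trans (mxrankS (rowsub_sub _ _)) _.
have -> : colsub g A = trmx (rowsub g (trmx A)) by apply/matrixP => i j; rewrite !mxE.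
by rewrite mxrank_tr -[leqRHS]mxrank_tr mxrankS ?rowsub_sub.
Qed.

Lemma cut_matrixE (T : finType) (adj : rel T) (X : {set T}) x y
    (xX : x \in X) (yX : y \in ~: X) :
  cut_matrix adj X (enum_rank_in xX x) (enum_rank_in yX y) = (adj x y)%:R%R.
Proof. by rewrite mxE !enum_rankK_in. Qed.

(* The entries adj (f i) (g j) for i, j in A form a lower unitriangular minor of the cut matrix. *)
Lemma cut_rank_ge_triangular (T : finType) (adj : rel T) (X : {set T})
    d (I : finOrderType d) (A : {pred I}) (f g : I -> T) :
  {in A, forall i, f i \in X} -> {in A, forall i, g i \notin X} ->
  {in A &, forall i j, adj (f i) (g j) = (j <= i)%O} ->
  (#|A| <= cut_rank adj X)%N.
Proof.
move=> fX gX fg; pose e (s : 'I_#|A|) : I := Order.enum_val s.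
have eA s : e s \in A := Order.enum_valP s.
have gXC s : g (e s) \in ~: X by rewrite in_setC gX.
pose B := mxsub (fun s => enum_rank_in (fX _ (eA s)) (f (e s)))
                (fun t => enum_rank_in (gXC t) (g (e t))) (cut_matrix adj X).
have BE s t : B s t = ((t <= s)%N)%:R%R.
  by rewrite mxE cut_matrixE fg // (Order.le_enum_val le_total).
suff <- : \rank B = #|A| by exact: mxrank_mxsub.
apply: mxrank_unit; rewrite unitmxE det_trig.
  by rewrite big1 ?unitr1 // => s _; rewrite BE leqnn.
by apply/is_trig_mxP => s t lt_st; rewrite BE leqNgt lt_st.
Qed.

Lemma fin_exists_choice (I J : finType) (P : I -> J -> bool) (j0 : J) :
  exists y : I -> J, forall i, [exists j, P i j] -> P i (y i).
Proof.
exists (fun i => odflt j0 [pick j | P i j]) => i /existsP[j Pij].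
by case: pickP => //= /(_ j); rewrite Pij.
Qed.

Section ComparabilityGrid.
Variable n : nat.
Local Notation vertex := (grid_vertex n.+1 n.+1).
Local Notation adj := (@cgrid_adj n.+1 n.+1).

Lemma cgrid_adj_sym : symmetric adj.
Proof. by move=> u v; rewrite /cgrid_adj eq_sym orbC. Qed.

Lemma cgrid_adj_swap (i j i' j' : 'I_n.+1) : adj (j, i) (j', i') = adj (i, j) (i', j').
Proof.
rewrite /cgrid_adj !xpair_eqE /=; congr (~~ _ && _); first exact: andbC.
by congr (_ || _); apply: andbC.
Qed.

Lemma ord_gt0 (j : 'I_n.+1) : (0 < j)%N = (j != ord0).
Proof. by rewrite lt0n -val_eqE. Qed.

Lemma cgrid_adj_ord0 (i i' j : 'I_n.+1) : (0 < j)%N -> adj (i, ord0) (i', j) = (i <= i')%N.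
Proof.
move=> j_gt0; rewrite /cgrid_adj xpair_eqE /= (leq0n j) andbT.
have -> : (ord0 == j) = false by apply/negbTE; rewrite eq_sym -ord_gt0.
by rewrite andbF /= (leqNgt j) j_gt0 andbF orbF.
Qed.

Definition mixed_lines (L : 'I_n.+1 -> 'I_n.+1 -> vertex) (X : {set vertex}) :=
  [set i | [exists j, L i j \in X] && [exists j, L i j \notin X]].

Local Notation rows := (fun i j : 'I_n.+1 => (i, j)).
Local Notation cols := (fun j i : 'I_n.+1 => (i, j)).

Lemma mixed_linesC L X : mixed_lines L (~: X) = mixed_lines L X.
Proof.
by apply/setP => i; rewrite !inE andbC; under eq_existsb do rewrite in_setC negbK;
   under [X in _ && X]eq_existsb do rewrite in_setC.
Qed.

Lemma card_mixed_lines L X :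
    (forall i j i' j', adj (L i j) (L i' j') = adj (i, j) (i', j')) ->
  (#|mixed_lines L X| <= 2 * cut_rank adj X)%N.
Proof.
move=> adjL.
have [y yP] := fin_exists_choice (fun i j => L i j \notin X) ord0.
have [x xP] := fin_exists_choice (fun i j => L i j \in X) ord0.
set A1 := [set i | (L i ord0 \in X) && [exists j, L i j \notin X]].
set A2 := [set i | (L i ord0 \notin X) && [exists j, L i j \in X]].
have sub : mixed_lines L X \subset A1 :|: A2.
  by apply/subsetP => i; rewrite !inE => /andP[-> ->]; rewrite !andbT orbN.
have card1 : (#|A1| <= cut_rank adj X)%N.
  apply: (cut_rank_ge_triangular (I := ('I_n.+1)^d) (f := fun i => L i ord0)
            (g := fun i => L i (y i))) => [i | i | i i'];
    rewrite ?inE => /andP[iX /yP iY] //.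
  move=> /andP[i'X /yP i'Y]; rewrite adjL cgrid_adj_ord0 // ord_gt0.
  by apply: contraNneq i'Y => ->.
have card2 : (#|A2| <= cut_rank adj X)%N.
  apply: (cut_rank_ge_triangular (f := fun i => L i (x i))
            (g := fun i => L i ord0)) => [i | i | i i'];
    rewrite ?inE => /andP[iX /xP iY] //.
  move=> /andP[_ _]; rewrite adjL cgrid_adj_sym cgrid_adj_ord0 // ord_gt0.
  by apply: contraTneq iY => ->.
rewrite (leq_trans (subset_leq_card sub)) // (leq_trans (leq_card_setU _ _)) //.
by rewrite mul2n -addnn leq_add.
Qed.

Lemma pure_line L X i j : i \notin mixed_lines L X -> L i j \notin X ->
  forall j', L i j' \notin X.
Proof.
rewrite inE negb_and => /orP[/existsPn // | /existsPn allX ijX j'].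
by have := allX j; rewrite ijX.
Qed.

Lemma subset_mixed_lines X i0 j1 :
    i0 \notin mixed_lines rows X -> j1 \notin mixed_lines cols X -> (i0, j1) \notin X ->
  X \subset setX (mixed_lines rows X) (mixed_lines cols X).
Proof.
move=> i0R j1C i0j1X; apply/subsetP => -[i j] ijX.
have i0jX := pure_line i0R i0j1X j.
have ij1X := pure_line (L := cols) j1C i0j1X i.
rewrite !inE; apply/andP; split; apply/andP; split; apply/existsP; by eexists; eassumption.
Qed.

Lemma exists_notin_ord k (A : {set 'I_k}) : (#|A| < k)%N -> exists i, i \notin A.
Proof.
move=> ltAk; have /set0Pn[i] : ~: A != set0.
  by rewrite -card_gt0 -(leq_add2l #|A|) cardsC card_ord addn1.
by rewrite inE; exists i.
Qed.

Lemma minn_card_setC_le X :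
    (2 * cut_rank adj X < n.+1)%N ->
  (minn #|X| #|~: X| <= (2 * cut_rank adj X) ^ 2)%N.
Proof.
move=> small_r; set r := cut_rank adj X.
set R := mixed_lines rows X; set C := mixed_lines cols X.
have cardR : (#|R| <= 2 * r)%N by apply: card_mixed_lines.
have cardC : (#|C| <= 2 * r)%N.
  by apply: card_mixed_lines => i j i' j'; rewrite cgrid_adj_swap.
have [i0 i0R] := exists_notin_ord (leq_ltn_trans cardR small_r).
have [j1 j1C] := exists_notin_ord (leq_ltn_trans cardC small_r).
have card_cover (S : {set vertex}) : S \subset setX R C -> (#|S| <= (2 * r) ^ 2)%N.
  move=> /subset_leq_card /leq_trans; apply; rewrite cardsX expnS expn1.
  exact: leq_mul.
(* X and ~: X have the same mixed lines, so the side missing (i0, j1) is covered. *)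
have [i0j1X | i0j1X] := boolP ((i0, j1) \in X).
- rewrite (leq_trans (geq_minr _ _)) // card_cover //.
  rewrite /R /C -(mixed_linesC rows) -(mixed_linesC cols).
  by apply: (subset_mixed_lines (i0 := i0) (j1 := j1)); rewrite ?mixed_linesC // inE negbK.
- by rewrite (leq_trans (geq_minl _ _)) // card_cover // (subset_mixed_lines i0R j1C).
Qed.

End ComparabilityGrid.

Theorem mainTheorem8 (n : nat) (X : {set grid_vertex n n}) :
  (1 <= n)%N ->
  (2 * #|X| <= n ^ 2)%N ->
  (4 * cut_rank (@cgrid_adj n n) X <= n)%N ->
  (3 * #|X| < n ^ 2)%N.
Proof.
case: n X => // n X _ halfX rank_small.
set r := cut_rank _ X in rank_small.
have small_side : (minn #|X| #|~: X| <= (2 * r) ^ 2)%N.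
  by apply: minn_card_setC_le; rewrite -/r; lia.
have cardXC : (#|X| + #|~: X| = n.+1 ^ 2)%N.
  by rewrite cardsC card_prod !card_ord expnS expn1.
have := leq_mul rank_small rank_small.
rewrite -!mulnn in small_side cardXC halfX *; nia.
Qed.
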